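(* Let $P$ and $Q$ be broken combs, and let $(P,c,x)$ and $(Q,c',x')$ be $n$-generated models on them, rooted at their roots, which are $3$-bisimilar. Then they are (fully) bisimilar.
   Context: An $n$-comb is a poset $\{x_1,\dots,x_n\}\sqcup\{y_1,\dots,y_n\}$ where $y_i\le z$ iff $y_i=z$, and $x_i\le z$ iff $z=x_j$ with $i\le j$ or $z=y_j$ with $i\le j$. A broken comb is a subposet of some $n$-comb containing all of $x_1,\dots,x_n$. A model over $n$ is a finite rooted poset with an order-preserving colouring into subsets of $\{p_1,\dots,p_n\}$; it is $n$-generated if no two distinct points generate bisimilar rooted submodels. Bisimulation: a relation relating the roots, preserving colours, with forth and back conditions along $\le$. $k$-bisimulation: relations $S_k\subseteq\dots\subseteq S_0$, roots related by $S_k$, $S_0$ colour-preserving, forth and back conditions from $S_{j+1}$ to $S_j$ for $j<k$. *)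

From mathcomp Require Import all_boot.
Set Implicit Arguments. Unset Strict Implicit. Unset Printing Implicit Defensive.

(* A (pointed) model: a carrier T, an order relation le, a colouring
   c : T -> {set 'I_n} (the subset of {p_1,...,p_n} true at a point). *)

Section Models.
Variable n : nat.
Implicit Types T : Type.

Definition is_root (T : Type) (le : rel T) (r : T) : Prop := forall a, le r a.

Definition is_model (T : finType) (le : rel T) (c : T -> {set 'I_n}) : Prop :=
  [/\ reflexive le, antisymmetric le, transitive le,
      (exists r, is_root le r) &
      (forall a b, le a b -> c a \subset c b)].

Definition colour_pres (T1 T2 : Type) (c1 : T1 -> {set 'I_n})
  (c2 : T2 -> {set 'I_n}) (Z : T1 -> T2 -> Prop) : Prop :=
  forall a b, Z a b -> c1 a = c2 b.

Definition forth (T1 T2 : Type) (le1 : rel T1) (le2 : rel T2)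
  (Z Z' : T1 -> T2 -> Prop) : Prop :=
  forall a b a', Z a b -> le1 a a' -> exists b', le2 b b' /\ Z' a' b'.

Definition back (T1 T2 : Type) (le1 : rel T1) (le2 : rel T2)
  (Z Z' : T1 -> T2 -> Prop) : Prop :=
  forall a b b', Z a b -> le2 b b' -> exists a', le1 a a' /\ Z' a' b'.

Definition bisimilar (T1 T2 : Type) (le1 : rel T1) (c1 : T1 -> {set 'I_n})
  (r1 : T1) (le2 : rel T2) (c2 : T2 -> {set 'I_n}) (r2 : T2) : Prop :=
  exists Z : T1 -> T2 -> Prop,
    [/\ Z r1 r2, colour_pres c1 c2 Z, forth le1 le2 Z Z & back le1 le2 Z Z].

Definition k_bisimilar (k : nat) (T1 T2 : Type) (le1 : rel T1)
  (c1 : T1 -> {set 'I_n}) (r1 : T1) (le2 : rel T2) (c2 : T2 -> {set 'I_n})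
  (r2 : T2) : Prop :=
  exists S : nat -> T1 -> T2 -> Prop,
    [/\ (forall j, j < k -> forall a b, S j.+1 a b -> S j a b),
        S k r1 r2,
        colour_pres c1 c2 (S 0) &
        (forall j, j < k -> forth le1 le2 (S j.+1) (S j) /\
                            back le1 le2 (S j.+1) (S j))].

Definition gen_pt (T : Type) (le : rel T) (w : T) := {v : T | le w v}.
Definition gen_le (T : Type) (le : rel T) (w : T) : rel (gen_pt le w) :=
  fun a b => le (val a) (val b).
Definition gen_col (T : Type) (le : rel T) (c : T -> {set 'I_n}) (w : T)
  : gen_pt le w -> {set 'I_n} := fun a => c (val a).

Definition n_generated (T : Type) (le : rel T) (c : T -> {set 'I_n}) : Prop :=
  forall (w v : T) (hw : le w w) (hv : le v v),
    bisimilar (@gen_le T le w) (@gen_col T le c w) (exist _ w hw)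
              (@gen_le T le v) (@gen_col T le c v) (exist _ v hv) -> w = v.

End Models.

(* The m-comb: points inl i = x_(i+1), inr i = y_(i+1), for i < m. *)
Definition comb_pt (m : nat) := ('I_m + 'I_m)%type.

Definition comb_le (m : nat) : rel (comb_pt m) := fun a b =>
  match a, b with
  | inl i, inl j => (i <= j)%N
  | inl i, inr j => (i <= j)%N
  | inr i, inr j => i == j
  | inr _, inl _ => false
  end.

Definition broken_comb (m : nat) (A : {set comb_pt m}) : Prop :=
  forall i : 'I_m, inl i \in A.

Definition bc_pt (m : nat) (A : {set comb_pt m}) := {a : comb_pt m | a \in A}.
Definition bc_le (m : nat) (A : {set comb_pt m}) : rel (bc_pt A) :=
  fun a b => comb_le (val a) (val b).
Arguments bc_le {m} A.

From mathcomp Require Import all_boot.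
Set Implicit Arguments. Unset Strict Implicit. Unset Printing Implicit Defensive.

(* The colour type of a point u is its colour together with the set of colours
   above it; 2-bisimilar points have the same set of colour types above them.
   In an n-generated broken comb this set determines the order:
   [up_types w \subset up_types u] forces [u <= w].  Since every point is above
   the root, 3-bisimilarity of the roots makes every point 2-bisimilar to some
   point of the other model, and "same colour and same up_types" is then a
   full bisimulation. *)

Section ColourTypes.
Variables (n : nat) (T : finType) (le : rel T) (c : T -> {set 'I_n}).

Definition up_colours (u : T) : {set {set 'I_n}} := c @: [set w | le u w].
Definition colour_type (u : T) := (c u, up_colours u).
Definition up_types (u : T) := colour_type @: [set w | le u w].

Definition maximal (w : T) : Prop := forall x, le w x -> x = w.

Definition up_types_reflect_le : Prop :=
  forall u w, up_types w \subset up_types u -> le u w.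

Lemma colour_type_up (u w : T) : le u w -> colour_type w \in up_types u.
Proof. by move=> Huw; apply: imset_f; rewrite inE. Qed.

Lemma colour_up (u w : T) : le u w -> c w \in up_colours u.
Proof. by move=> Huw; apply: imset_f; rewrite inE. Qed.

Lemma up_types_antimono (u w : T) :
  transitive le -> le u w -> up_types w \subset up_types u.
Proof.
move=> le_trans Huw; apply/subsetP => t /imsetP [x]; rewrite inE => Hwx ->.
exact/colour_type_up/(le_trans _ _ _ Huw Hwx).
Qed.

Lemma up_colours_maximal (w : T) :
  reflexive le -> maximal w -> up_colours w = [set c w].
Proof.
move=> le_refl Hw; apply/setP => s; rewrite inE; apply/imsetP/eqP.
- by move=> [x]; rewrite inE => /Hw -> ->.
- by move=> ->; exists w; rewrite ?inE.
Qed.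

Hypotheses (Hm : is_model le c) (Hng : n_generated le c).

Lemma monochrome_up_inj (z w : T) s :
  up_colours z = [set s] -> up_colours w = [set s] -> z = w.
Proof.
case: Hm => le_refl _ _ _ _ Hz Hw.
apply: (@Hng z w (le_refl z) (le_refl w)).
exists (fun _ _ => True); split => //.
- move=> a b _; rewrite /gen_col.
  move: (colour_up (valP a)) (colour_up (valP b)).
  by rewrite Hz Hw !inE => /eqP -> /eqP ->.
- by move=> a b a' _ _; exists b; rewrite /gen_le le_refl.
- by move=> a b b' _ _; exists a; rewrite /gen_le le_refl.
Qed.

(* The up-set of z is the up-set of w plus z itself, so gluing z to w is a
   bisimulation between the generated submodels. *)
Lemma eq_of_colour_cover (z w : T) : c z = c w -> le z w ->
  (forall a, le z a -> a = z \/ le w a) -> z = w.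
Proof.
case: Hm => le_refl _ le_trans _ _ Hc Hzw Hup.
apply: (@Hng z w (le_refl z) (le_refl w)).
exists (fun a b => val a = val b \/ (val a = z /\ val b = w)); split.
- by right.
- by move=> a b [E|[E1 E2]]; rewrite /gen_col ?E ?E1 ?E2.
- move=> a b a' [Eab|[Ea Eb]] Haa'.
  + have Hb' : le w (val a').
      by move: Haa'; rewrite /gen_le Eab; apply: (le_trans _ _ _ (valP b)).
    by exists (exist _ (val a') Hb'); split; [rewrite /gen_le /= -Eab | left].
  + case: (Hup (val a') (valP a')) => [E|H].
    * by exists b; split; [rewrite /gen_le le_refl | right].
    * by exists (exist _ (val a') H); split; [rewrite /gen_le /= Eb | left].
- move=> a b b' [Eab|[Ea Eb]] Hbb'.
  + have Ha' : le z (val b').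
      by move: Hbb'; rewrite /gen_le -Eab; apply: (le_trans _ _ _ (valP a)).
    by exists (exist _ (val b') Ha'); split; [rewrite /gen_le /= Eab | left].
  + have Ha' : le z (val b') := le_trans _ _ _ Hzw (valP b').
    by exists (exist _ (val b') Ha'); split; [rewrite /gen_le /= Ea | left].
Qed.

Lemma le_maximal_of_type_up (u w : T) :
  maximal w -> colour_type w \in up_types u -> le u w.
Proof.
case: (Hm) => le_refl _ _ _ _ Hw /imsetP [z]; rewrite inE => Huz [_ Ez].
have Hwc := up_colours_maximal le_refl Hw.
by rewrite -(monochrome_up_inj (etrans (esym Ez) Hwc) Hwc).
Qed.

Lemma eq_maximal_of_up_types_sub (u w : T) :
  maximal u -> up_types w \subset up_types u -> w = u.
Proof.
case: (Hm) => le_refl _ _ _ _ Hu /subsetP/(_ _ (colour_type_up (le_refl w))).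
case/imsetP => z; rewrite inE => /Hu -> [_ Ew].
have Huc := up_colours_maximal le_refl Hu.
exact: monochrome_up_inj (etrans Ew Huc) Huc.
Qed.

End ColourTypes.

Lemma up_image_eq (T1 T2 : finType) (le1 : rel T1) (le2 : rel T2)
  (Z Z' : T1 -> T2 -> Prop) (R : finType) (f1 : T1 -> R) (f2 : T2 -> R) :
  forth le1 le2 Z Z' -> back le1 le2 Z Z' ->
  (forall x y, Z' x y -> f1 x = f2 y) ->
  forall a b, Z a b -> f1 @: [set w | le1 a w] = f2 @: [set w | le2 b w].
Proof.
move=> Hf Hb Hfe a b Zab; apply/setP=> s; apply/imsetP/imsetP => -[w].
- rewrite inE => Hw ->; have [b' [Hb' Z'ab']] := Hf _ _ _ Zab Hw.
  by exists b'; rewrite ?inE // (Hfe _ _ Z'ab').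
- rewrite inE => Hw ->; have [a' [Ha' Z'a'b]] := Hb _ _ _ Zab Hw.
  by exists a'; rewrite ?inE // (Hfe _ _ Z'a'b).
Qed.

Lemma bisimilar_of_3_bisimilar n (T1 T2 : finType)
  (le1 : rel T1) (c1 : T1 -> {set 'I_n}) (r1 : T1)
  (le2 : rel T2) (c2 : T2 -> {set 'I_n}) (r2 : T2) :
  transitive le1 -> transitive le2 -> is_root le1 r1 -> is_root le2 r2 ->
  up_types_reflect_le le1 c1 -> up_types_reflect_le le2 c2 ->
  k_bisimilar 3 le1 c1 r1 le2 c2 r2 -> bisimilar le1 c1 r1 le2 c2 r2.
Proof.
move=> le1_trans le2_trans Hr1 Hr2 refl1 refl2 [S [Smon Sroot Scol Sfb]].
have S10 := Smon 0 isT; have S21 := Smon 1 isT.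
have col2 a b : S 2 a b -> c1 a = c2 b by move=> /S21/S10/Scol.
have type1 a b : S 1 a b -> colour_type le1 c1 a = colour_type le2 c2 b.
  move=> S1ab; rewrite /colour_type (Scol _ _ (S10 _ _ S1ab)).
  by rewrite /up_colours (up_image_eq (Sfb 0 isT).1 (Sfb 0 isT).2 Scol S1ab).
have types2 a b : S 2 a b -> up_types le1 c1 a = up_types le2 c2 b.
  exact: (up_image_eq (Sfb 1 isT).1 (Sfb 1 isT).2 type1).
have Sroot2 := Smon 2 isT _ _ Sroot.
exists (fun u v => c1 u = c2 v /\ up_types le1 c1 u = up_types le2 c2 v); split.
- by split; [exact: col2 Sroot2 | exact: types2 Sroot2].
- by move=> a b [].
- move=> u v u' [_ Euv] Huu'.
  have [v' [_ S2u'v']] := (Sfb 2 isT).1 r1 r2 u' Sroot (Hr1 u').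
  exists v'; split; last by split; [exact: col2 _ _ S2u'v' | exact: types2].
  by apply: refl2; rewrite -(types2 _ _ S2u'v') -Euv up_types_antimono.
- move=> u v v' [_ Euv] Hvv'.
  have [u' [_ S2u'v']] := (Sfb 2 isT).2 r1 r2 v' Sroot (Hr2 v').
  exists u'; split; last by split; [exact: col2 _ _ S2u'v' | exact: types2].
  by apply: refl1; rewrite (types2 _ _ S2u'v') Euv up_types_antimono.
Qed.

Section BrokenComb.
Variables (n m : nat) (A : {set comb_pt m}) (HA : broken_comb A).
Variable c : bc_pt A -> {set 'I_n}.
Hypotheses (Hm : is_model (bc_le A) c) (Hng : n_generated (bc_le A) c).

Lemma bc_tooth_maximal (y : bc_pt A) k : val y = inr k -> maximal (bc_le A) y.
Proof.
move=> Ey x; rewrite /bc_le Ey; case: x => [[l|l] Hl] //= /eqP El.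
by apply: val_inj; rewrite /= Ey El.
Qed.

(* Inclusion would put the colour type of the tooth y_i above x_(i+1); without
   that tooth, n-generation glues x_i to x_(i+1). *)
Lemma bc_up_types_spine_step (w x : bc_pt A) (i j : 'I_m) :
  val w = inl i -> val x = inl j -> j = i.+1 :> nat ->
  ~ up_types (bc_le A) c w \subset up_types (bc_le A) c x.
Proof.
move=> Ew Ex Ej Hsub.
case: (Hm) => le_refl _ _ _ Hcol.
have Hwx : bc_le A w x by rewrite /bc_le Ew Ex /= Ej.
have Hcwx : c w = c x.
  have /imsetP [z] := subsetP Hsub _ (colour_type_up c (le_refl w)).
  rewrite inE => Hxz [Ez _]; apply/eqP; rewrite eqEsubset Hcol //= Ez.
  exact: Hcol.
case Hy: (inr i \in A).
  pose y : bc_pt A := exist _ (inr i) Hy.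
  have Hxy : bc_le A x y.
    apply: (le_maximal_of_type_up Hm Hng (bc_tooth_maximal (erefl : val y = _))).
    by apply/(subsetP Hsub)/colour_type_up; rewrite /bc_le Ew /=.
  by move: Hxy; rewrite /bc_le Ex /= Ej ltnn.
have Ewx : w = x.
  apply: (eq_of_colour_cover Hm Hng Hcwx Hwx) => a.
  case: a => [[l|l] Ha]; rewrite /bc_le Ew Ex /= Ej leq_eqVlt.
  - case/orP => [/eqP/val_inj El | ->]; last by right.
    by left; apply: val_inj; rewrite Ew El.
  - case/orP => [/eqP/val_inj El | ->]; last by right.
    by rewrite El Ha in Hy.
by move: Ew; rewrite Ewx Ex => -[/(congr1 val)]; rewrite /= Ej => /eqP; rewrite eqn_leq ltnn.
Qed.

Lemma bc_up_types_reflect_le : up_types_reflect_le (bc_le A) c.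
Proof.
case: (Hm) => le_refl _ le_trans _ _ u w Hsub.
case Ew: (val w) => [k|k]; last first.
  apply: (le_maximal_of_type_up Hm Hng (bc_tooth_maximal Ew)).
  exact: (subsetP Hsub) _ (colour_type_up c (le_refl w)).
case Eu: (val u) => [i|i]; last first.
  by rewrite (eq_maximal_of_up_types_sub Hm Hng (bc_tooth_maximal Eu) Hsub).
rewrite /bc_le Eu Ew /=; case: leqP => // Hki.
have Hk1 : k.+1 < m := leq_ltn_trans Hki (ltn_ord i).
pose x : bc_pt A := exist _ (inl (Ordinal Hk1)) (HA _).
have Hxu : bc_le A x u by rewrite /bc_le Eu.
case: (bc_up_types_spine_step Ew (erefl : val x = _) (erefl _)).
exact: subset_trans Hsub (up_types_antimono c le_trans Hxu).
Qed.

End BrokenComb.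

Theorem mainTheorem9 (n m m' : nat)
  (A : {set comb_pt m}) (A' : {set comb_pt m'})
  (HA : broken_comb A) (HA' : broken_comb A')
  (c : bc_pt A -> {set 'I_n}) (c' : bc_pt A' -> {set 'I_n})
  (r : bc_pt A) (r' : bc_pt A') :
  is_model (bc_le A) c -> is_model (bc_le A') c' ->
  n_generated (bc_le A) c -> n_generated (bc_le A') c' ->
  is_root (bc_le A) r -> is_root (bc_le A') r' ->
  k_bisimilar 3 (bc_le A) c r (bc_le A') c' r' ->
  bisimilar (bc_le A) c r (bc_le A') c' r'.
Proof.
move=> Hm Hm' Hng Hng' Hr Hr'.
apply: bisimilar_of_3_bisimilar => //.
- by case: Hm.
- by case: Hm'.
- exact: (bc_up_types_reflect_le HA Hm Hng).
- exact: (bc_up_types_reflect_le HA' Hm' Hng').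
Qed.
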